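(* Let $D=2$, $C/2<K<C$, $U=rC$ and $\bar a=rK$ for some positive integer $r$, and let all user and creator types be drawn i.i.d. from the uniform distribution on $\{x\in\mathbb R^2_{\ge0}:\|x\|_2=1\}$, with creators indexed $1,\dots,C$ in increasing order of the angle of their type. Then the set of creators that stay after $t=0$ under the user-centric recommendation $UC_0$ (i.e. $\mathcal C_1$) is of the form $\{i,i+1,\dots,j\}$ for some $i,j\in[1,C]$, and $j-i+1\le K$; that is, at most $K$ creators stay.
   Context: Users $\mathcal U_0=\{1,\dots,U\}$, creators $\mathcal C_0=\{1,\dots,C\}$. At $t=0$ the user-centric recommendation assigns each user $i$ the set $UC_0(i)\in\arg\max_{S\subseteq\mathcal C_0,|S|\le K}\sum_{j\in S}u_i^Tc_j$. Creator $j$ stays after $t=0$ if $|\{i\in\mathcal U_0:j\in UC_0(i)\}|\ge\bar a$. *)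

From HB Require Import structures.
From mathcomp Require Import all_boot all_order all_algebra.
From mathcomp Require Import all_classical all_reals all_analysis.
Set Implicit Arguments. Unset Strict Implicit. Unset Printing Implicit Defensive.
Import Order.TTheory GRing.Theory Num.Theory.
Local Open Scope ring_scope.

(* A type in the support of the uniform distribution on
   {x in R^2_{>=0} : ||x||_2 = 1}: the point of angle t, 0 <= t <= pi/2. *)
Definition typ {R : realType} (t : R) : R * R := (cos t, sin t).

Definition dot {R : realType} (x y : R * R) : R := x.1 * y.1 + x.2 * y.2.

(* Relevance u_i^T c_j of creator j for user i; theta = user angles,
   phi = creator angles. *)
Definition score {R : realType} {U C : nat}
  (theta : 'I_U -> R) (phi : 'I_C -> R) (i : 'I_U) (j : 'I_C) : R :=
  dot (typ (theta i)) (typ (phi j)).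

Definition is_UC_choice {R : realType} {U C : nat} (K : nat)
  (theta : 'I_U -> R) (phi : 'I_C -> R) (i : 'I_U) (S : {set 'I_C}) : Prop :=
  (#|S| <= K)%N /\
  forall S' : {set 'I_C}, (#|S'| <= K)%N ->
    \sum_(j in S') score theta phi i j <= \sum_(j in S) score theta phi i j.

Definition stays {U C : nat} (UC : 'I_U -> {set 'I_C}) (abar : nat)
  (j : 'I_C) : bool :=
  (abar <= #|[set i : 'I_U | j \in UC i]|)%N.

(* For a user of angle t the score of creator k is cos (t - phi k).  With all
   angles in [0, pi/2] and phi strictly increasing, these scores are
   single-peaked in k and at most one of them is non-positive, so every top-K
   set UC_0(i) is a block of exactly K consecutive creators.  Since C < 2K,
   such a block always contains C - K, ..., K - 1: these creators are
   recommended to all rC users and stay.  Left of that range a creator's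
   audience grows towards the middle and right of it it shrinks, so the
   staying creators are consecutive.  Two creators at distance >= K share no
   user, so they cannot both reach rK users out of rC < 2rK. *)

From HB Require Import structures.
From mathcomp Require Import all_boot all_order all_algebra.
From mathcomp Require Import all_classical all_reals all_analysis.
From mathcomp Require Import zify lra.
Import Order.TTheory GRing.Theory Num.Theory.
Local Open Scope ring_scope.

Set Implicit Arguments.
Unset Strict Implicit.
Unset Printing Implicit Defensive.

Section OrdConvex.
Variable C : nat.

Definition ord_convex (S : {set 'I_C}) : Prop :=
  forall j k l : 'I_C, (j < k < l)%N -> j \in S -> l \in S -> k \in S.

Lemma card_ord_interval (i j : 'I_C) :
  #|[set k : 'I_C | (i <= k <= j)%N]| = (j.+1 - i)%N.
Proof.
rewrite cardE -(size_map val) -(size_iota i (j.+1 - i)).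
apply/perm_size/uniq_perm; first by rewrite map_inj_uniq ?enum_uniq //; exact: val_inj.
  exact: iota_uniq.
move=> y; rewrite mem_iota; apply/mapP/idP => [[k] | hy].
  by rewrite mem_enum inE => hk ->; move: hk; rewrite /=; lia.
have yC : (y < C)%N by have := ltn_ord j; lia.
by exists (Ordinal yC); rewrite // mem_enum inE /=; lia.
Qed.

Lemma ord_convex_interval (S : {set 'I_C}) (x : 'I_C) :
  ord_convex S -> x \in S ->
  exists i j : 'I_C, S = [set k : 'I_C | (i <= k <= j)%N] /\ (i <= j)%N.
Proof.
move=> cS xS.
have [i iS min_i] := arg_minnP (fun k : 'I_C => nat_of_ord k) xS.
have [j jS max_j] := arg_maxnP (fun k : 'I_C => nat_of_ord k) xS.
exists i, j; split; last exact: min_i j jS.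
apply/setP => k; rewrite inE; apply/idP/idP => [kS | /andP[ik kj]].
  by rewrite (min_i _ kS) (max_j _ kS : (k <= j)%N).
case: (ltngtP i k) => [lt_ik | lt_ki | /val_inj <- //]; last by lia.
case: (ltngtP k j) => [lt_kj | lt_jk | /val_inj -> //]; last by lia.
by apply: (cS i k j) => //; rewrite lt_ik lt_kj.
Qed.

Lemma ord_convex_mem_lo (S : {set 'I_C}) (j k : 'I_C) :
  ord_convex S -> j \in S -> (j <= k < #|S|)%N -> k \in S.
Proof.
move=> cS jS; have [a [b [eS _]]] := ord_convex_interval cS jS.
by move: jS; rewrite eS card_ord_interval !inE; lia.
Qed.

Lemma ord_convex_mem_hi (S : {set 'I_C}) (k l : 'I_C) :
  ord_convex S -> l \in S -> (C - #|S| <= k <= l)%N -> k \in S.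
Proof.
move=> cS lS; have [a [b [eS _]]] := ord_convex_interval cS lS.
by move: lS; rewrite eS card_ord_interval !inE; have := ltn_ord b; lia.
Qed.

Lemma ord_convex_mid (S : {set 'I_C}) (k : 'I_C) :
  ord_convex S -> (C - #|S| <= k < #|S|)%N -> k \in S.
Proof.
move=> cS hk; have /card_gt0P [x xS] : (0 < #|S|)%N by lia.
case: (leqP x k) => xk; first by apply: (ord_convex_mem_lo cS xS); lia.
by apply: (ord_convex_mem_hi cS xS); lia.
Qed.

Lemma ord_convex_span (S : {set 'I_C}) (a b : 'I_C) :
  ord_convex S -> a \in S -> b \in S -> (b < a + #|S|)%N.
Proof.
move=> cS aS bS; have [i [j [eS _]]] := ord_convex_interval cS aS.
by move: aS bS; rewrite eS card_ord_interval !inE; lia.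
Qed.

End OrdConvex.

Definition single_peaked (R : realType) (C : nat) (g : 'I_C -> R) : Prop :=
  forall j k l : 'I_C, (j < k < l)%N -> g j < g k \/ g l < g k.

Section TopSets.
Variables (R : realType) (C K : nat) (f : 'I_C -> R) (S : {set 'I_C}).
Hypothesis S_le : (#|S| <= K)%N.
Hypothesis S_max : forall S' : {set 'I_C}, (#|S'| <= K)%N ->
  \sum_(j in S') f j <= \sum_(j in S) f j.

Lemma top_set_out_le_in j k : j \notin S -> k \in S -> f j <= f k.
Proof.
move=> jS kS.
have jSk : j \notin S :\ k by rewrite !inE (negbTE jS) andbF.
have := @S_max (j |: (S :\ k)).
rewrite (big_setU1 _ jSk) (big_setD1 _ kS) /= lerD2r; apply.
by move: S_le; rewrite cardsU1 jSk (cardsD1 k S) kS.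
Qed.

Lemma top_set_out_le0 j : j \notin S -> (#|S| < K)%N -> f j <= 0.
Proof.
move=> jS lt_SK; have := @S_max (j |: S).
by rewrite cardsU1 jS (big_setU1 _ jS) /= gerDr; apply.
Qed.

Lemma top_set_card :
  (K < C)%N -> (forall j l, f j <= 0 -> f l <= 0 -> j = l) -> #|S| = K.
Proof.
move=> lt_KC le0_uniq; apply/eqP; rewrite eqn_leq S_le leqNgt; apply/negP => lt_SK.
have : (1 < #|~: S|)%N by have := cardsC S; rewrite card_ord; lia.
case/card_gt1P => [x [y [+ + /eqP]]]; rewrite !inE => xS yS; apply.
by apply: le0_uniq; apply: top_set_out_le0.
Qed.

Lemma top_set_convex : single_peaked f -> ord_convex S.
Proof.
move=> peak j k l jkl jS lS; apply/negPn/negP => kS.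
case: (peak j k l jkl); apply/negP; rewrite -leNgt; exact: top_set_out_le_in.
Qed.

End TopSets.

Lemma cos_lt_norm (R : realType) (x y : R) :
  `|x| < `|y| -> `|y| <= pi -> cos y < cos x.
Proof.
move=> xy y_pi; rewrite -(cos_norm x) -(cos_norm y).
by rewrite ltr_cos // !in_itv /= !normr_ge0 //= (le_trans (ltW xy)).
Qed.

Section CosineScores.
Variables (R : realType) (C : nat) (t : R) (phi : 'I_C -> R).
Hypothesis t_range : 0 <= t <= pi / 2.
Hypothesis phi_range : forall j, 0 <= phi j <= pi / 2.
Hypothesis phi_incr : forall j k : 'I_C, (j < k)%N -> phi j < phi k.

Lemma cos_sub_single_peaked : single_peaked (fun k => cos (t - phi k)).
Proof.
move=> j k l /andP[/phi_incr jk /phi_incr kl].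
have := @pi_gt0 R; move: t_range (phi_range j) (phi_range k) (phi_range l).
move=> /andP[? ?] /andP[? ?] /andP[? ?] /andP[? ?] ?.
case: (lerP 0 (t - phi k)) => hk; [left | right]; apply: cos_lt_norm.
- by rewrite (ger0_norm hk) ger0_norm; lra.
- by rewrite ger0_norm; lra.
- by rewrite (ltr0_norm hk) ltr0_norm; lra.
- by rewrite ltr0_norm; lra.
Qed.

Lemma cos_sub_le0 (s : R) : 0 <= s <= pi / 2 -> cos (t - s) <= 0 -> s = pi / 2 - t.
Proof.
move: t_range => /andP[? ?] /andP[? ?]; apply: contra_leP => ne_s.
by apply: cos_gt0_pihalf; apply/andP; split; lra.
Qed.

Lemma cos_sub_le0_unique j l :
  cos (t - phi j) <= 0 -> cos (t - phi l) <= 0 -> j = l.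
Proof.
move=> /(cos_sub_le0 (phi_range j)) ej /(cos_sub_le0 (phi_range l)) el.
by case: (ltngtP j l) => [/phi_incr | /phi_incr | /val_inj //]; rewrite ej el ltxx.
Qed.

End CosineScores.

Section Audience.
Variables (U C K : nat) (UC : 'I_U -> {set 'I_C}).
Hypothesis UC_card : forall u, #|UC u| = K.
Hypothesis UC_convex : forall u, ord_convex (UC u).

Definition audience (j : 'I_C) : {set 'I_U} := [set u | j \in UC u].

Lemma audience_mid (k : 'I_C) : (C - K <= k < K)%N -> audience k = [set: 'I_U].
Proof.
move=> hk; apply/setP => u; rewrite !inE.
by apply: ord_convex_mid; rewrite ?UC_card.
Qed.

Lemma audience_sub_lo (j k : 'I_C) :
  (j <= k < K)%N -> audience j \subset audience k.
Proof.
move=> hjk; apply/fintype.subsetP => u; rewrite !inE => ju.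
by apply: (ord_convex_mem_lo _ ju); rewrite ?UC_card.
Qed.

Lemma audience_sub_hi (k l : 'I_C) :
  (C - K <= k <= l)%N -> audience l \subset audience k.
Proof.
move=> hkl; apply/fintype.subsetP => u; rewrite !inE => lu.
by apply: (ord_convex_mem_hi _ lu); rewrite ?UC_card.
Qed.

Lemma audience_disjoint (a b : 'I_C) :
  (a + K <= b)%N -> [disjoint audience a & audience b].
Proof.
move=> ab; rewrite -setI_eq0; apply/eqP/setP => u; rewrite !inE.
apply/negbTE/andP => -[au bu].
by have := ord_convex_span (@UC_convex u) au bu; rewrite UC_card; lia.
Qed.

Lemma stays_mid abar (k : 'I_C) :
  (abar <= U)%N -> (C - K <= k < K)%N -> stays UC abar k.
Proof. by move=> abarU hk; rewrite /stays -/(audience k) audience_mid // cardsT card_ord. Qed.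

Lemma stays_convex abar :
  (C <= K + K)%N -> ord_convex [set k | stays UC abar k].
Proof.
move=> CK j k l /andP[jk kl]; rewrite !inE /stays -!/(audience _) => Pj Pl.
case: (ltnP k K) => kK.
  by apply: (leq_trans Pj); apply/subset_leq_card/audience_sub_lo; lia.
by apply: (leq_trans Pl); apply/subset_leq_card/audience_sub_hi; lia.
Qed.

Lemma stays_span abar (a b : 'I_C) :
  (U < abar + abar)%N -> stays UC abar a -> stays UC abar b -> (b < a + K)%N.
Proof.
rewrite /stays -!/(audience _) => U_lt Pa Pb; rewrite ltnNge; apply/negP => ab.
have /eqP card_U : #|audience a :|: audience b| == (#|audience a| + #|audience b|)%N.
  by rewrite (leq_card_setU _ _).2 audience_disjoint.
have := subset_leq_card (finset.subsetT (audience a :|: audience b)).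
rewrite cardsT card_ord card_U => card_le.
by have := leq_trans (leq_add Pa Pb) card_le; lia.
Qed.

End Audience.

Theorem lemma12 (R : realType) (C K r : nat)
  (hr : (0 < r)%N) (hK1 : (C < 2 * K)%N) (hK2 : (K < C)%N)
  (theta : 'I_(r * C) -> R) (phi : 'I_C -> R)
  (htheta : forall i, 0 <= theta i <= pi / 2)
  (hphi : forall j, 0 <= phi j <= pi / 2)
  (hinc : forall j k : 'I_C, (j < k)%N -> phi j < phi k)
  (UC : 'I_(r * C) -> {set 'I_C})
  (hUC : forall i, is_UC_choice K theta phi i (UC i)) :
  exists i j : 'I_C,
    [set k : 'I_C | stays UC (r * K) k] = [set k : 'I_C | (i <= k <= j)%N]
    /\ (i <= j)%N /\ (j - i + 1 <= K)%N.
Proof.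
have score_cos u j : score theta phi u j = cos (theta u - phi j).
  by rewrite /score /dot /typ /= cosB.
have UC_card u : #|UC u| = K.
  case: (hUC u) => S_le S_max; apply: top_set_card S_le S_max hK2 _ => j l.
  by rewrite !score_cos; exact: cos_sub_le0_unique.
have UC_convex u : ord_convex (UC u).
  case: (hUC u) => S_le S_max; apply: top_set_convex S_le S_max _ => j k l.
  by rewrite !score_cos; exact: cos_sub_single_peaked.
have mid_lt : (K.-1 < C)%N by lia.
have mid_stays : Ordinal mid_lt \in [set k | stays UC (r * K) k].
  rewrite inE; apply: (stays_mid UC_card UC_convex); last by rewrite /=; lia.
  by rewrite leq_pmul2l // ltnW.
have CK : (C <= K + K)%N by lia.
have [i [j [stays_eq ij]]] :=
  ord_convex_interval (stays_convex UC_card UC_convex CK) mid_stays.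
exists i, j; split; [exact: stays_eq | split; first exact: ij].
have U_lt : (r * C < r * K + r * K)%N by rewrite -mulnDr ltn_pmul2l // addnn -mul2n.
have stays_ij (k : 'I_C) : (i <= k <= j)%N -> stays UC (r * K) k.
  by move/setP/(_ k): stays_eq; rewrite !inE => ->.
have := stays_span UC_card UC_convex U_lt (stays_ij i _) (stays_ij j _).
by rewrite leqnn ij; lia.
Qed.
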